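(* Let $K\ge2$ and $\tilde a_1,\dots,\tilde a_K\in\mathbb{R}$ satisfy $\sum_{j=i}^K\tilde a_j>0$ for all $i\in\{1,\dots,K\}$. There are $t_0,D_3\in(0,\infty)$ such that for every $t\in[t_0,\infty)$, every admissible $n$ and every $\mathbf z\in G^n$, $$\mathbb{E}_{\mathbf z}|\hat{\mathbf Z}^n(|\mathbf z|t)|^2\le D_3\Big(t|\mathbf z|+\frac{1+t^2(|\mathbf z|^2+1)}{n}\Big).$$
   Context: Only integers $n>\max_l(\max(\tilde a_l,0))^2$ are considered. Let $A_1,\dots,A_K,D_1,\dots,D_K$ be mutually independent rate-one Poisson processes. The ranked queue-length process $\mathbf X^n=(X^n_1,\dots,X^n_K)'$ (with $X^n_1(0)\le\dots\le X^n_K(0)$ nonnegative integers) solves $$X^n_i(t)=X^n_i(0)+A_i\Big(n\int_0^t\alpha^n_i(s)\mathbf 1_{\{X^n_i(s)<X^n_{i+1}(s)\}}ds\Big)-D_i\Big(n\int_0^t\delta^n_i(s)\mathbf 1_{\{X^n_i(s)>X^n_{i-1}(s)\}}ds\Big),$$ with $X^n_0\equiv0$, $X^n_{K+1}\equiv\infty$, $\delta^n_i(t)=\sum_{j}\mathbf 1_{\{X^n_j(t)=X^n_i(t)\}}$, $\alpha^n_i(t)=\sum_j(1-\tilde a_jn^{-1/2})\mathbf 1_{\{X^n_j(t)=X^n_i(t)\}}$. The gap process $\hat{\mathbf Z}^n(t)=n^{-1/2}(X^n_1(t),X^n_2(t)-X^n_1(t),\dots,X^n_K(t)-X^n_{K-1}(t))'$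 is a Markov process on $G^n=n^{-1/2}\mathbb{N}_0^K$; $\mathbb{E}_{\mathbf z}$ denotes expectation when $\hat{\mathbf Z}^n(0)=\mathbf z$. $|\cdot|$ is the Euclidean norm. *)

From HB Require Import structures.
From mathcomp Require Import all_boot all_order all_algebra.
From mathcomp Require Import all_classical all_reals all_analysis.
Set Implicit Arguments. Unset Strict Implicit. Unset Printing Implicit Defensive.
Import Order.TTheory GRing.Theory Num.Theory.
Local Open Scope ring_scope.

(* Queues are indexed 0..K-1 (paper: 1..K); a : nat -> R is
   (ã_1,...,ã_K) shifted to indices 0..K-1.  A state of the gap chain is
   m : nat -> nat with m j = 0 for j >= K; it represents
   Ẑ^n = n^{-1/2} (m 0, ..., m (K-1)) in G^n, i.e. m = sqrt n * Ẑ^n.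
   The ranked queue lengths are the partial sums X_i = m 0 + ... + m i. *)

Section GapChain.
Variables (R : realType) (K : nat) (a : nat -> R) (n : nat).

Definition Xq (m : nat -> nat) (i : nat) : nat := (\sum_(j < i.+1) m j)%N.

(* indicator 1{X_i < X_{i+1}}, with X_{K+1} = +oo *)
Definition arr_ok (m : nat -> nat) (i : nat) : bool :=
  (i.+1 < K)%N ==> (Xq m i < Xq m i.+1)%N.

Definition dep_ok (m : nat -> nat) (i : nat) : bool :=
  if i is i'.+1 then (Xq m i' < Xq m i)%N else (0 < Xq m 0)%N.

Definition alpha (m : nat -> nat) (i : nat) : R :=
  \sum_(j < K | Xq m j == Xq m i) (1 - a j / Num.sqrt (n%:R)).
Definition delta (m : nat -> nat) (i : nat) : R :=
  \sum_(j < K | Xq m j == Xq m i) 1.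

Definition arr_rate (m : nat -> nat) (i : nat) : R :=
  n%:R * alpha m i * (arr_ok m i)%:R.
Definition dep_rate (m : nat -> nat) (i : nat) : R :=
  n%:R * delta m i * (dep_ok m i)%:R.

(* effect on the gap vector of X_i -> X_i + 1, resp. X_i -> X_i - 1 *)
Definition arr_move (m : nat -> nat) (i : nat) : nat -> nat :=
  fun j => if j == i then (m j + 1)%N
           else if (j == i.+1) && (j < K)%N then (m j - 1)%N else m j.
Definition dep_move (m : nat -> nat) (i : nat) : nat -> nat :=
  fun j => if j == i then (m j - 1)%N
           else if (j == i.+1) && (j < K)%N then (m j + 1)%N else m j.

(* uniformization constant: an upper bound of the total jump rate
   for every admissible n *)
Definition Lam : R := n%:R * (2 * K%:R + \sum_(j < K) `|a j|) + 1.

Definition step (f : (nat -> nat) -> R) (m : nat -> nat) : R :=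
  \sum_(i < K) (arr_rate m i / Lam * f (arr_move m i)
                + dep_rate m i / Lam * f (dep_move m i))
  + (1 - \sum_(i < K) (arr_rate m i + dep_rate m i) / Lam) * f m.

(* E_m f(state at time t) for the continuous-time Markov chain with the
   above jump rates, via uniformization:
   sum_k e^{-Lam t} (Lam t)^k / k! (P^k f)(m).  Extended-real valued. *)
Definition Ezt (t : R) (f : (nat -> nat) -> R) (m : nat -> nat) : \bar R :=
  (\sum_(0 <= k <oo)
     ((expR (- (Lam * t)) * (Lam * t) ^+ k / (k`!)%:R) * iter k step f m)%:E)%E.

Definition zsq (m : nat -> nat) : R := (\sum_(j < K) ((m j)%:R ^+ 2)) / n%:R.
Definition znorm (m : nat -> nat) : R := Num.sqrt (zsq m).

End GapChain.

From HB Require Import structures.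
From mathcomp Require Import all_boot all_order all_algebra.
From mathcomp Require Import all_classical all_reals all_analysis.
From mathcomp Require Import zify ring lra.
Import Order.TTheory GRing.Theory Num.Theory.
Local Open Scope ring_scope.

(* Let X be the vector of ranked queue lengths and Phi = |X|^2, so that |Z^n|^2 <= Phi / n.
   Uniformization writes E_z f(Z^n(s)) as the Poisson(Lam s) average of the iterates P^k f of
   a one-step operator P.  Within a block of tied queues only the top queue can gain and only
   the bottom one can lose a customer, each at the rate of the whole block, so the one-step
   drift of Phi is at most 1 - (2 sqrt n / Lam) sum_j a_j X_j; summation by parts and the
   positive tail sums sum_(j >= i) a_j >= beta bound it by 1 - kappa sqrt Phi.  Hence sqrt Phi
   drifts down by kappa/4 per step above the level 2/kappa, and comparing it with the hinge
   (y - r)_+^2 for a level r decreasing at that speed gives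
   P^k |Z^n|^2 <= (2 max(sqrt Phi - kappa k / 4, 2 / kappa)^2 + 10 k) / n.
   For t >= t0 the Poisson mean is at least twice the time the level needs to reach 2/kappa,
   and the Poisson average of this envelope, quadratic in k, is O(t |z|).  When |z| <= t the
   crude bound P^k Phi <= Phi + k suffices. *)

Lemma sum_indicator_unique {R : pzSemiRingType} (K : nat) (P : pred nat) i0 :
  (i0 < K)%N -> P i0 -> (forall i, (i < K)%N -> P i -> i = i0) ->
  \sum_(i < K) (P i)%:R = 1 :> R.
Proof.
move=> i0K Pi0 uniqP; rewrite (bigD1 (Ordinal i0K)) //= Pi0 big1 ?addr0 //.
move=> i /eqP neq; case Pi: (P i) => //; exfalso; apply: neq.
by apply: ord_inj; apply: uniqP; rewrite ?Pi.
Qed.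

Lemma exists_pos_lower_bound {R : realDomainType} (f : nat -> R) N :
  (forall i, (i < N)%N -> 0 < f i) -> exists2 b, 0 < b & forall i, (i < N)%N -> b <= f i.
Proof.
elim: N => [|N IH] f_gt0; first by exists 1.
have [b b0 b_le] := IH (fun i iN => f_gt0 i (ltnW iN)).
exists (Num.min b (f N)); first by rewrite lt_min b0 f_gt0.
move=> i; rewrite ltnS leq_eqVlt => /orP[/eqP ->|iN]; first by rewrite ge_min lexx orbT.
by rewrite ge_min b_le.
Qed.

Lemma sqr_sum_le {R : realFieldType} N (x : nat -> R) :
  (\sum_(j < N) x j) ^+ 2 <= N%:R * \sum_(j < N) x j ^+ 2.
Proof.
elim: N => [|N IH]; first by rewrite !big_ord0 expr0n /= mul0r.
rewrite !big_ord_recr /= -[N.+1]addn1 natrD.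
set S := \sum_(j < N) x j in IH *; set Q := \sum_(j < N) x j ^+ 2 in IH *.
have Q0 : 0 <= Q by apply: sumr_ge0 => j _; exact: sqr_ge0.
case: (posnP N) => [N0|N_gt0].
  by rewrite /S N0 big_ord0 /=; nra.
have N0 : (0 : R) < N%:R by rewrite ltr0n.
have cross : 2 * S * x N <= Q + N%:R * x N ^+ 2.
  by rewrite -(ler_pM2l N0); have := sqr_ge0 (S - N%:R * x N); nra.
nra.
Qed.

Lemma sqrtr_le_sqr {R : rcfType} (x y : R) : 0 <= y -> x <= y ^+ 2 -> Num.sqrt x <= y.
Proof. by move=> y0 h; rewrite -(ger0_norm y0) -sqrtr_sqr ler_sqrt ?sqr_ge0. Qed.

Lemma sqr_le_sqrtr {R : rcfType} (x y : R) : 0 <= y -> y ^+ 2 <= x -> y <= Num.sqrt x.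
Proof.
move=> y0 h; rewrite -(ger0_norm y0) -sqrtr_sqr ler_sqrt //.
exact: le_trans (sqr_ge0 y) h.
Qed.

Lemma sqrtr_sub_le {R : rcfType} (x y : R) : 0 <= x -> 0 < y ->
  Num.sqrt x - Num.sqrt y <= (x - y) / (2 * Num.sqrt y).
Proof.
move=> x0 y0; have sy : 0 < Num.sqrt y by rewrite sqrtr_gt0.
rewrite ler_pdivlMr ?mulr_gt0 //.
rewrite -[in X in _ <= X - _](sqr_sqrtr x0) -[in X in _ <= _ - X](sqr_sqrtr (ltW y0)).
have := sqr_ge0 (Num.sqrt x - Num.sqrt y); nra.
Qed.

(** * Ranked queue lengths and tie blocks *)

Section Ties.
Variable K : nat.

Lemma XqS m i : Xq m i.+1 = (Xq m i + m i.+1)%N.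
Proof. by rewrite /Xq big_ord_recr. Qed.

Lemma Xq0 m : Xq m 0%N = m 0%N.
Proof. by rewrite /Xq big_ord_recr big_ord0. Qed.

Lemma leq_Xq m i j : (i <= j)%N -> (Xq m i <= Xq m j)%N.
Proof.
move=> /subnKC <-; elim: (j - i)%N => [|d IH]; first by rewrite addn0.
by rewrite addnS XqS (leq_trans IH) // leq_addr.
Qed.
Arguments leq_Xq m {i j}.

Lemma gap_le_Xq m i : (m i <= Xq m i)%N.
Proof. by case: i => [|i]; rewrite ?Xq0 ?XqS ?leq_addl. Qed.

Lemma arr_ok_tie_exists m j : (j < K)%N ->
  exists2 i, (i < K)%N & arr_ok K m i && (Xq m i == Xq m j).
Proof.
move=> jK; have [d] : exists d, (j + d).+1 = K by exists (K - j.+1)%N; lia.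
elim: d j jK => [|d IH] j jK hd.
  by exists j => //; rewrite eqxx andbT /arr_ok; apply/implyP => h; lia.
case ok: (arr_ok K m j); first by exists j; rewrite ?ok ?eqxx.
move: ok; rewrite /arr_ok => /negbT; rewrite negb_imply -leqNgt => /andP[j1K le].
have -> : Xq m j = Xq m j.+1 by apply/eqP; rewrite eqn_leq leq_Xq.
apply: IH => //; lia.
Qed.

Lemma arr_ok_tie_uniq m i i' : (i < K)%N -> (i' < K)%N -> arr_ok K m i -> arr_ok K m i' ->
  Xq m i = Xq m i' -> i = i'.
Proof.
wlog lt : i i' / (i < i')%N.
  move=> H iK i'K ok ok' e; case: (ltngtP i i') => [lt|gt|//]; first exact: H.
  exact/esym/(H i' i gt i'K iK ok' ok (esym e)).
move=> iK i'K ok _ e; have i1K : (i.+1 < K)%N by lia.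
move: ok; rewrite /arr_ok i1K /=; have := leq_Xq m lt; lia.
Qed.

Lemma dep_ok_Xq_gt0 {m i} : dep_ok m i -> (0 < Xq m i)%N.
Proof. by case: i => [|i] //= h; apply: leq_ltn_trans h. Qed.

Lemma dep_ok_tie_exists m j : (0 < Xq m j)%N ->
  exists2 i, (i <= j)%N & dep_ok m i && (Xq m i == Xq m j).
Proof.
elim: j => [|j IH] pos; first by exists 0%N => //=; rewrite pos eqxx.
case ok: (dep_ok m j.+1); first by exists j.+1; rewrite ?ok ?eqxx.
move: ok => /= /negbT; rewrite -leqNgt => le.
have e : Xq m j = Xq m j.+1 by apply/eqP; rewrite eqn_leq le leq_Xq.
have [i ij ok] : exists2 i, (i <= j)%N & dep_ok m i && (Xq m i == Xq m j).
  by apply: IH; rewrite e.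
by exists i; rewrite 1?leqW // -e.
Qed.

Lemma dep_ok_tie_uniq m i i' : dep_ok m i -> dep_ok m i' -> Xq m i = Xq m i' -> i = i'.
Proof.
wlog lt : i i' / (i < i')%N.
  move=> H ok ok' e; case: (ltngtP i i') => [lt|gt|//]; first exact: H.
  exact/esym/(H i' i gt ok' ok (esym e)).
case: i' lt => [|i'] // lt _ /= ok' e; have := leq_Xq m (lt : (i <= i')%N); lia.
Qed.

Lemma sum_arr_ok_tie {R : pzSemiRingType} m j : (j < K)%N ->
  \sum_(i < K) (arr_ok K m i && (Xq m i == Xq m j))%:R = 1 :> R.
Proof.
move=> jK; have [i0 i0K /andP[ok0 /eqP e0]] := arr_ok_tie_exists m j jK.
apply: (@sum_indicator_unique _ _ (fun i => arr_ok K m i && (Xq m i == Xq m j)) _ i0K).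
  by rewrite ok0 e0 eqxx.
move=> i iK /andP[ok /eqP e]; apply: (@arr_ok_tie_uniq m i i0 iK i0K ok ok0).
by rewrite e e0.
Qed.

Lemma sum_dep_ok_tie {R : pzSemiRingType} m j : (j < K)%N ->
  \sum_(i < K) (dep_ok m i && (Xq m i == Xq m j))%:R = (0 < Xq m j)%N%:R :> R.
Proof.
move=> jK; case: (posnP (Xq m j)) => [z|pos].
  rewrite big1 // => i _; case ok: (dep_ok m i) => //=.
  by rewrite z; have := dep_ok_Xq_gt0 ok; case: (Xq m i).
have [i0 i0j /andP[ok0 /eqP e0]] := dep_ok_tie_exists m j pos.
apply: (@sum_indicator_unique _ _ (fun i => dep_ok m i && (Xq m i == Xq m j)) _
  (leq_ltn_trans i0j jK)); first by rewrite ok0 e0 eqxx.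
move=> i _ /andP[ok /eqP e]; apply: (@dep_ok_tie_uniq m i i0 ok ok0).
by rewrite e e0.
Qed.

Lemma arr_ok_gap_gt0 {m i} : arr_ok K m i -> (i.+1 < K)%N -> (0 < m i.+1)%N.
Proof. rewrite /arr_ok => /implyP h /h; rewrite XqS; lia. Qed.

Lemma dep_ok_gap_gt0 {m i} : dep_ok m i -> (0 < m i)%N.
Proof. case: i => [|i] /=; rewrite ?Xq0 ?XqS //; lia. Qed.

Lemma Xq_arr_move m i p : arr_ok K m i -> (p < K)%N ->
  Xq (arr_move K m i) p = (Xq m p + (p == i))%N.
Proof.
move=> ok; elim: p => [|p IH] pK.
  by rewrite !Xq0 /arr_move; case: (eqVneq 0%N i) => //= _; rewrite addn0.
rewrite !XqS IH ?(ltnW pK) // /arr_move eqSS.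
case: (eqVneq p.+1 i) => [<-|ne]; first by rewrite (ltn_eqF (ltnSn p)); lia.
case: (eqVneq p i) => [e|ne'] /=; last lia.
by subst i; rewrite pK; have := arr_ok_gap_gt0 ok pK; lia.
Qed.

(* Stated additively to avoid truncated subtraction. *)
Lemma Xq_dep_move {m i p} : dep_ok m i -> (p < K)%N ->
  (Xq (dep_move K m i) p + (p == i))%N = Xq m p.
Proof.
move=> ok; have pos := dep_ok_gap_gt0 ok.
elim: p => [|p IH] pK.
  rewrite !Xq0 /dep_move; case: (eqVneq 0%N i) => [e|_] /=; first rewrite -e in pos; lia.
have := IH (ltnW pK); rewrite !XqS /dep_move eqSS.
case: (eqVneq p.+1 i) => [e|ne]; first by subst i; rewrite (ltn_eqF (ltnSn p)) /=; lia.
case: (eqVneq p i) => [e|ne'] /=; last lia.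
by subst i; rewrite pK; lia.
Qed.

End Ties.

Section SquaredNorm.
Variables (R : realType) (K : nat).

Definition Xr (m : nat -> nat) (i : nat) : R := (Xq m i)%:R.

Definition Phi m := \sum_(p < K) Xr m p ^+ 2.

Lemma Xr_ge0 m i : 0 <= Xr m i.
Proof. exact: ler0n. Qed.

Lemma Phi_ge0 m : 0 <= Phi m.
Proof. by apply: sumr_ge0 => p _; rewrite sqr_ge0. Qed.

Lemma sum_sqr_bump (x : nat -> R) (c : R) i : (i < K)%N ->
  \sum_(p < K) (x p + c * ((p : nat) == i)%:R) ^+ 2 = \sum_(p < K) x p ^+ 2 + 2 * c * x i + c ^+ 2.
Proof.
move=> iK; rewrite (bigD1 (Ordinal iK)) // [in RHS](bigD1 (Ordinal iK)) //= eqxx.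
rewrite (eq_bigr (fun p : 'I_K => x p ^+ 2)) => [|p /eqP neq]; first by rewrite /= mulr1; ring.
case: eqP => [e|_]; last by rewrite mulr0 addr0.
by exfalso; apply: neq; apply: ord_inj.
Qed.

Lemma Phi_arr_move m i : arr_ok K m i -> (i < K)%N ->
  Phi (arr_move K m i) = Phi m + 2 * Xr m i + 1.
Proof.
move=> ok iK; have := sum_sqr_bump (Xr m) 1 i iK; rewrite mulr1 expr1n => <-.
by apply: eq_bigr => p _; rewrite /Xr Xq_arr_move // natrD mul1r.
Qed.

Lemma Phi_dep_move m i : dep_ok m i -> (i < K)%N ->
  Phi (dep_move K m i) = Phi m - 2 * Xr m i + 1.
Proof.
move=> ok iK; have := sum_sqr_bump (Xr m) (-1) i iK.
rewrite mulrN1 mulNr sqrrN expr1n => <-; apply: eq_bigr => p _.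
by rewrite /Xr -(Xq_dep_move _ ok (ltn_ord p)) natrD mulN1r addrK.
Qed.

Lemma Xr_le_sqrt_Phi m {i} : (i < K)%N -> Xr m i <= Num.sqrt (Phi m).
Proof.
move=> iK; rewrite -(ger0_norm (Xr_ge0 m i)) -sqrtr_sqr ler_sqrt ?Phi_ge0 //.
rewrite /Phi (bigD1 (Ordinal iK)) //= lerDl.
by apply: sumr_ge0 => p _; exact: sqr_ge0.
Qed.

Definition normX m := Num.sqrt (Phi m).

Lemma normX_ge0 m : 0 <= normX m.
Proof. exact: sqrtr_ge0. Qed.

Lemma sqr_normX m : normX m ^+ 2 = Phi m.
Proof. exact/sqr_sqrtr/Phi_ge0. Qed.

Lemma normX_arr_move m i : arr_ok K m i -> (i < K)%N ->
  normX m <= normX (arr_move K m i) <= normX m + 1.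
Proof.
move=> ok iK; have X_le := Xr_le_sqrt_Phi m iK; have X0 := Xr_ge0 m i.
have N0 := normX_ge0 m; rewrite -/(normX m) in X_le.
apply/andP; split; [apply: sqr_le_sqrtr | apply: sqrtr_le_sqr]; rewrite ?Phi_arr_move //.
- by rewrite sqr_normX; lra.
- lra.
- by rewrite -sqr_normX; nra.
Qed.

Lemma normX_dep_move m i : dep_ok m i -> (i < K)%N ->
  normX m - 1 <= normX (dep_move K m i) <= normX m.
Proof.
move=> ok iK; have X_le := Xr_le_sqrt_Phi m iK; rewrite -/(normX m) in X_le.
have X1 : 1 <= Xr m i by rewrite ler1n; exact: dep_ok_Xq_gt0 ok.
have N0 := normX_ge0 m.
apply/andP; split; [apply: sqr_le_sqrtr | apply: sqrtr_le_sqr]; rewrite ?Phi_dep_move //.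
- lra.
- by rewrite -sqr_normX; nra.
- by rewrite -sqr_normX; lra.
Qed.

Lemma Phi_le_last m : (0 < K)%N -> Phi m <= K%:R * Xr m K.-1 ^+ 2.
Proof.
move=> K_gt0; apply: (@le_trans _ _ (\sum_(p < K) Xr m K.-1 ^+ 2)).
  apply: ler_sum => p _; rewrite lerXn2r ?nnegrE ?Xr_ge0 // ler_nat leq_Xq //.
  by rewrite -ltnS prednK.
by rewrite sumr_const card_ord mulr_natl.
Qed.

Lemma normX_le_last m : (0 < K)%N -> normX m <= K%:R * Xr m K.-1.
Proof.
move=> K_gt0; have X0 := Xr_ge0 m K.-1; have K1 : (1 : R) <= K%:R by rewrite ler1n.
apply: sqrtr_le_sqr; first by rewrite mulr_ge0 ?ler0n.
by have := Phi_le_last m K_gt0; nra.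
Qed.

Lemma Phi_le_sum_sqr m : (0 < K)%N -> Phi m <= K%:R ^+ 2 * \sum_(j < K) (m j)%:R ^+ 2.
Proof.
move=> K_gt0; apply: le_trans (Phi_le_last m K_gt0) _.
rewrite [K%:R ^+ 2]expr2 -mulrA ler_wpM2l ?ler0n // /Xr /Xq prednK // natr_sum.
exact: (sqr_sum_le K (fun j => (m j)%:R)).
Qed.

End SquaredNorm.

Arguments normX_arr_move R {K m i}.
Arguments normX_dep_move R {K m i}.

Lemma sum_mul_Xr_abel (R : realType) (a : nat -> R) N m :
  \sum_(j < N) a j * Xr R m j = \sum_(i < N) (m i)%:R * \sum_(i <= j < N) a j.
Proof.
elim: N => [|N IH]; first by rewrite !big_ord0.
rewrite big_ord_recr IH [in RHS]big_ord_recr.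
rewrite [in RHS](eq_bigr (fun i : 'I_N => (m i)%:R * \sum_(i <= j < N) a j + (m i)%:R * a N));
  last by move=> i _; rewrite big_nat_recr ?mulrDr //=; exact: ltnW.
by rewrite big_split /= big_nat1 -mulr_suml /Xr /Xq natr_sum big_ord_recr /=; ring.
Qed.

(** * Poisson moments *)

Section PoissonMoments.
Context {R : realType}.

Lemma nneg_series_le (u : nat -> R) (B : R) : (forall k, 0 <= u k) ->
  (forall N, \sum_(0 <= k < N) u k <= B) -> (\sum_(0 <= k <oo) (u k)%:E <= B%:E)%E.
Proof.
move=> u0 partial_le; apply: lime_le.
  by apply: is_cvg_ereal_nneg_natsum => k _; rewrite lee_fin.
by apply: nearW => N; rewrite /= sumEFin lee_fin.
Qed.

Definition exp_term (lam : R) (k : nat) := lam ^+ k / (k`!)%:R.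

Variable lam : R.
Hypothesis lam_ge0 : 0 <= lam.

Lemma exp_term_ge0 k : 0 <= exp_term lam k.
Proof. by rewrite divr_ge0 ?exprn_ge0 ?ler0n. Qed.

Lemma exp_termS k : k.+1%:R * exp_term lam k.+1 = lam * exp_term lam k.
Proof.
rewrite /exp_term factS natrM exprS; field.
by rewrite addrC natr1 !pnatr_eq0 -!lt0n fact_gt0.
Qed.

Lemma sum_exp_term_le N : \sum_(0 <= k < N) exp_term lam k <= expR lam.
Proof.
have := @nondecreasing_cvgn_le R (series (exp_coeff lam)) _ (is_cvg_series_exp_coeff lam) N.
apply; apply/nondecreasing_seqP => k; rewrite /series /= big_nat_recr //= lerDl.
exact: exp_coeff_ge0.
Qed.

Lemma sum_mul_exp_termE N :
  \sum_(0 <= k < N) k%:R * exp_term lam k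
  = lam * \sum_(0 <= k < N) exp_term lam k - N%:R * exp_term lam N.
Proof.
elim: N => [|N IH]; first by rewrite !big_geq // mul0r mulr0 subr0.
by rewrite !big_nat_recr //= IH exp_termS; ring.
Qed.

Lemma sum_sqr_exp_termE N :
  \sum_(0 <= k < N) (k%:R - lam) ^+ 2 * exp_term lam k
  = lam * \sum_(0 <= k < N) exp_term lam k + N%:R * exp_term lam N * (lam - N%:R).
Proof.
elim: N => [|N IH]; first by rewrite !big_geq //; ring.
by rewrite !big_nat_recr //= IH exp_termS -[N.+1]addn1 natrD; ring.
Qed.

Lemma sum_mul_exp_term_le N : \sum_(0 <= k < N) k%:R * exp_term lam k <= lam * expR lam.
Proof.
rewrite sum_mul_exp_termE; have := ler_wpM2l lam_ge0 (sum_exp_term_le N).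
by have := mulr_ge0 (ler0n R N) (exp_term_ge0 N); lra.
Qed.

Lemma sum_sqr_exp_term_le N :
  \sum_(0 <= k < N) (k%:R - lam) ^+ 2 * exp_term lam k <= lam * expR lam.
Proof.
pose M := maxn N (Num.truncn lam).+1.
have lam_lt : lam < M%:R by apply: lt_le_trans (truncnS_gt lam) _; rewrite ler_nat leq_maxr.
apply: (@le_trans _ _ (\sum_(0 <= k < M) (k%:R - lam) ^+ 2 * exp_term lam k)).
  rewrite (big_cat_nat (leq0n N) (leq_maxl N _)) /= lerDl.
  by apply: sumr_ge0 => k _; rewrite mulr_ge0 ?sqr_ge0 ?exp_term_ge0.
rewrite sum_sqr_exp_termE; have := ler_wpM2l lam_ge0 (sum_exp_term_le M).
have : M%:R * exp_term lam M * (lam - M%:R) <= 0.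
  apply: mulr_ge0_le0; first exact: mulr_ge0 (ler0n _ _) (exp_term_ge0 _).
  by rewrite subr_le0 ltW.
lra.
Qed.

Lemma poisson_mean_le (A B C : R) (u : nat -> R) :
  0 <= A -> 0 <= B -> 0 <= C ->
  (forall k, u k <= A + B * k%:R + C * (k%:R - lam) ^+ 2) ->
  forall N, \sum_(0 <= k < N) expR (- lam) * lam ^+ k / (k`!)%:R * u k <= A + B * lam + C * lam.
Proof.
move=> A0 B0 C0 u_le N; have e0 := expR_gt0 (- lam).
apply: (@le_trans _ _ (expR (- lam) * \sum_(0 <= k < N)
   (A * exp_term lam k + B * (k%:R * exp_term lam k) + C * ((k%:R - lam) ^+ 2 * exp_term lam k)))).
  rewrite mulr_sumr; apply: ler_sum => k _.
  have -> : expR (- lam) * lam ^+ k / (k`!)%:R * u k = expR (- lam) * (exp_term lam k * u k).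
    by rewrite /exp_term !mulrA.
  apply: ler_wpM2l; first exact: ltW.
  have -> : A * exp_term lam k + B * (k%:R * exp_term lam k)
            + C * ((k%:R - lam) ^+ 2 * exp_term lam k)
          = exp_term lam k * (A + B * k%:R + C * (k%:R - lam) ^+ 2) by ring.
  by apply: ler_wpM2l; [exact: exp_term_ge0 | exact: u_le].
rewrite !big_split /= -!mulr_sumr.
have := ler_wpM2l A0 (sum_exp_term_le N).
have := ler_wpM2l B0 (sum_mul_exp_term_le N).
have := ler_wpM2l C0 (sum_sqr_exp_term_le N).
move: (\sum_(0 <= k < N) _) (\sum_(0 <= k < N) _) (\sum_(0 <= k < N) _) => S2 S1 S0 le2 le1 le0.
have -> : A + B * lam + C * lam = expR (- lam) * ((A + B * lam + C * lam) * expR lam).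
  by rewrite mulrCA -expRD addNr expR0 mulr1.
by apply: ler_wpM2l; [exact: ltW | nra].
Qed.

End PoissonMoments.

Section Hinge.
Context {R : realType}.

Definition hinge (r y : R) := Num.max (y - r) 0 ^+ 2.

Lemma hinge_ge0 r y : 0 <= hinge r y.
Proof. exact: sqr_ge0. Qed.

Lemma hinge_le_sqr r y b : 0 <= b -> y - r <= b -> hinge r y <= b ^+ 2.
Proof. by move=> b0 h; rewrite /hinge maxEle; case: (leP (y - r) 0) => h1; nra. Qed.

Lemma hinge_sub_le r y y' :
  hinge r y' - hinge r y <= 2 * Num.max (y - r) 0 * (y' - y) + (y' - y) ^+ 2.
Proof.
rewrite /hinge !maxEle; case: (leP (y' - r) 0) => h1; case: (leP (y - r) 0) => h2.
- by have := sqr_ge0 (y' - y); nra.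
- by have := sqr_ge0 (y' - r); nra.
- nra.
- nra.
Qed.

Lemma hinge_shift_le r d y : 0 <= d ->
  hinge r y - 2 * d * Num.max (y - r) 0 <= hinge (r + d) y.
Proof.
move=> d0; rewrite /hinge !maxEle.
by case: (leP (y - r) 0) => h1; case: (leP (y - (r + d)) 0) => h2; nra.
Qed.

Lemma hinge_antitone rho r y : rho <= r -> hinge r y <= hinge rho y.
Proof.
move=> h; rewrite /hinge !maxEle.
by case: (leP (y - r) 0) => h1; case: (leP (y - rho) 0) => h2; nra.
Qed.

Lemma sqr_le_hinge r y : 0 <= r -> 0 <= y -> y ^+ 2 <= 2 * r ^+ 2 + 2 * hinge r y.
Proof.
move=> r0 y0; rewrite /hinge maxEle; case: (leP (y - r) 0) => h; first by have := sqr_ge0 r; nra.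
by have := sqr_ge0 (y - 2 * r); nra.
Qed.

End Hinge.

(** * The uniformized chain and its Lyapunov functions *)

Section Generator.
Variables (R : realType) (K : nat) (a : nat -> R) (n : nat).
Hypothesis K_gt0 : (0 < K)%N.
Hypothesis a_lt_n : forall l, (l < K)%N -> Num.max (a l) 0 ^+ 2 < n%:R.

Local Notation sqn := (Num.sqrt (n%:R : R)).
Local Notation L := (Lam K a n).
Local Notation P := (step K a n).
Local Notation Xr := (Xr R).
Local Notation Phi := (Phi R K).
Local Notation normX := (normX R K).

Definition arr_weight j : R := 1 - a j / sqn.
Definition Lam_coef : R := 2 * K%:R + \sum_(j < K) `|a j|.

Lemma n_gt0 : (0 < n)%N.
Proof.
have := a_lt_n 0%N K_gt0; rewrite -(ltr0n R); apply: le_lt_trans; exact: sqr_ge0.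
Qed.

Lemma sqrtn_ge1 : 1 <= sqn.
Proof. by rewrite -[leLHS]sqrtr1 ler_sqrt ?ler0n // ler1n n_gt0. Qed.

Lemma sqrtn_gt0 : 0 < sqn.
Proof. exact: lt_le_trans sqrtn_ge1. Qed.

Lemma sqr_sqrtn : sqn ^+ 2 = n%:R.
Proof. by rewrite sqr_sqrtr ?ler0n. Qed.

Lemma arr_weight_gt0 j : (j < K)%N -> 0 < arr_weight j.
Proof.
move=> jK; rewrite subr_gt0 ltr_pdivrMr ?sqrtn_gt0 // mul1r.
have max_ge0 : 0 <= Num.max (a j) 0 by rewrite le_max lexx orbT.
apply: le_lt_trans (_ : Num.max (a j) 0 < sqn); first by rewrite le_max lexx.
by rewrite -(ger0_norm max_ge0) -sqrtr_sqr ltr_sqrt ?ltr0n ?n_gt0 ?a_lt_n.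
Qed.

Lemma arr_weight_le j : arr_weight j <= 1 + `|a j|.
Proof.
rewrite lerD2l -mulNr; have s1 := sqrtn_ge1; have s0 := sqrtn_gt0.
apply: le_trans (_ : `|a j| / sqn <= _).
  by apply: ler_wpM2r; [rewrite invr_ge0 ltW | rewrite -normrN ler_norm].
by rewrite ler_pdivrMr // ler_peMr.
Qed.

Lemma Lam_coef_ge0 : 0 <= Lam_coef.
Proof. by rewrite addr_ge0 ?mulr_ge0 ?ler0n ?sumr_ge0. Qed.

Lemma LamE : L = n%:R * Lam_coef + 1.
Proof. by []. Qed.

Lemma Lam_ge1 : 1 <= L.
Proof. by rewrite LamE lerDr mulr_ge0 ?ler0n ?Lam_coef_ge0. Qed.

Lemma Lam_gt0 : 0 < L.
Proof. exact: lt_le_trans Lam_ge1. Qed.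

Lemma Lam_le : L <= n%:R * (Lam_coef + 1).
Proof.
rewrite LamE [n%:R * (_ + 1)]mulrDr mulr1 lerD2l ler1n; exact: n_gt0.
Qed.

Lemma sum_tie_regroup (ok : nat -> bool) (c v : nat -> R) (F : nat -> R) m :
  (forall j, (j < K)%N -> \sum_(i < K) (ok i && (Xq m i == Xq m j))%:R = c j) ->
  \sum_(i < K) (\sum_(j < K | Xq m j == Xq m i) v j) * (ok i)%:R * F (Xq m i)
  = \sum_(j < K) v j * c j * F (Xq m j).
Proof.
move=> count_c.
under eq_bigr => i _ do rewrite big_mkcond /= !mulr_suml.
rewrite exchange_big /=; apply: eq_bigr => j _.
rewrite -(count_c j (ltn_ord j)) mulr_sumr mulr_suml; apply: eq_bigr => i _.
by case: (eqVneq (Xq m j) (Xq m i)) => [->|ne] /=; rewrite ?andbT ?andbF /=; ring.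
Qed.

Lemma sum_arr_rate m (F : nat -> R) :
  \sum_(i < K) arr_rate K a n m i * F (Xq m i) = n%:R * \sum_(j < K) arr_weight j * F (Xq m j).
Proof.
transitivity (n%:R * \sum_(i < K) (\sum_(j < K | Xq m j == Xq m i) arr_weight j)
                                 * (arr_ok K m i)%:R * F (Xq m i)).
  by rewrite mulr_sumr; apply: eq_bigr => i _; rewrite /arr_rate /alpha !mulrA.
rewrite (@sum_tie_regroup _ (fun=> 1)) => [|j jK]; last exact: sum_arr_ok_tie.
by under eq_bigr do rewrite mulr1.
Qed.

Lemma sum_dep_rate m (F : nat -> R) :
  \sum_(i < K) dep_rate R K n m i * F (Xq m i)
  = n%:R * \sum_(j < K) (0 < Xq m j)%N%:R * F (Xq m j).
Proof.
transitivity (n%:R * \sum_(i < K) (\sum_(j < K | Xq m j == Xq m i) (fun=> 1) j)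
                                 * (dep_ok m i)%:R * F (Xq m i)).
  by rewrite mulr_sumr; apply: eq_bigr => i _; rewrite /dep_rate /delta !mulrA.
rewrite (@sum_tie_regroup (dep_ok m) (fun j => (0 < Xq m j)%N%:R) (fun=> 1) F m) => [|j jK];
  last exact: sum_dep_ok_tie.
by under eq_bigr do rewrite mul1r.
Qed.

Lemma arr_rate_ge0 m i : 0 <= arr_rate K a n m i.
Proof.
rewrite /arr_rate !mulr_ge0 ?ler0n // sumr_ge0 // => j _.
exact/ltW/arr_weight_gt0.
Qed.

Lemma dep_rate_ge0 m i : 0 <= dep_rate R K n m i.
Proof. by rewrite /dep_rate !mulr_ge0 ?ler0n ?sumr_ge0 // => j _; exact: ler01. Qed.

Lemma sum_weights_le m :
  \sum_(j < K) arr_weight j + \sum_(j < K) (0 < Xq m j)%N%:R <= Lam_coef.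
Proof.
have -> : Lam_coef = \sum_(j < K) (1 + `|a j|) + \sum_(j < K) 1.
  by rewrite /Lam_coef big_split /= sumr_const card_ord -mulr_natl; ring.
apply: lerD; apply: ler_sum => j _; first exact: arr_weight_le.
by case: (0 < Xq m j)%N.
Qed.

Definition parr m i := arr_rate K a n m i / L.
Definition pdep m i := dep_rate R K n m i / L.

Lemma parr_ge0 m i : 0 <= parr m i.
Proof. by rewrite divr_ge0 ?arr_rate_ge0 // ltW // Lam_gt0. Qed.

Lemma pdep_ge0 m i : 0 <= pdep m i.
Proof. by rewrite divr_ge0 ?dep_rate_ge0 // ltW // Lam_gt0. Qed.

Lemma parr0 m i : ~~ arr_ok K m i -> parr m i = 0.
Proof. by move/negbTE=> ok; rewrite /parr /arr_rate ok mulr0 mul0r. Qed.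

Lemma pdep0 m i : ~~ dep_ok m i -> pdep m i = 0.
Proof. by move/negbTE=> ok; rewrite /pdep /dep_rate ok mulr0 mul0r. Qed.

Lemma sum_jump_prob_le1 m : \sum_(i < K) (parr m i + pdep m i) <= 1.
Proof.
rewrite /parr /pdep; under eq_bigr do rewrite -mulrDl; rewrite -mulr_suml big_split /=.
rewrite ler_pdivrMr ?Lam_gt0 // mul1r.
have -> : \sum_(i < K) arr_rate K a n m i = n%:R * \sum_(j < K) arr_weight j.
  transitivity (\sum_(i < K) arr_rate K a n m i * 1); first by apply: eq_bigr => i _; rewrite mulr1.
  by rewrite (sum_arr_rate m (fun=> 1)); under eq_bigr do rewrite mulr1.
have -> : \sum_(i < K) dep_rate R K n m i = n%:R * \sum_(j < K) (0 < Xq m j)%N%:R.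
  transitivity (\sum_(i < K) dep_rate R K n m i * 1); first by apply: eq_bigr => i _; rewrite mulr1.
  by rewrite (sum_dep_rate m (fun=> 1)); under eq_bigr do rewrite mulr1.
rewrite -mulrDr LamE ler_wpDr // ler_wpM2l ?ler0n //; exact: sum_weights_le.
Qed.

Definition drift (f : (nat -> nat) -> R) m := \sum_(i < K)
  (parr m i * (f (arr_move K m i) - f m) + pdep m i * (f (dep_move K m i) - f m)).

Lemma stepE f m : P f m = f m + drift f m.
Proof.
have -> : drift f m = \sum_(i < K) (parr m i * f (arr_move K m i) + pdep m i * f (dep_move K m i))
                      - (\sum_(i < K) (parr m i + pdep m i)) * f m.
  by rewrite mulr_suml -sumrB; apply: eq_bigr => i _; ring.
rewrite /step; have -> : \sum_(i < K) (arr_rate K a n m i + dep_rate R K n m i) / L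
          = \sum_(i < K) (parr m i + pdep m i) by apply: eq_bigr => i _; rewrite mulrDl.
transitivity (\sum_(i < K) (parr m i * f (arr_move K m i) + pdep m i * f (dep_move K m i))
  + (1 - \sum_(i < K) (parr m i + pdep m i)) * f m); by [|ring].
Qed.

Lemma drift_affine c d f m : drift (fun x => c * f x + d) m = c * drift f m.
Proof. by rewrite /drift mulr_sumr; apply: eq_bigr => i _; ring. Qed.

Lemma drift_le f g m (c d : R) : 0 <= d ->
  (forall i, (i < K)%N -> arr_ok K m i ->
     f (arr_move K m i) - f m <= c * (g (arr_move K m i) - g m) + d) ->
  (forall i, (i < K)%N -> dep_ok m i ->
     f (dep_move K m i) - f m <= c * (g (dep_move K m i) - g m) + d) ->
  drift f m <= c * drift g m + d.
Proof.
move=> d0 arr_le dep_le.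
apply: le_trans (_ : _ <= c * drift g m + d * \sum_(i < K) (parr m i + pdep m i)) _.
  rewrite /drift !mulr_sumr -big_split; apply: ler_sum => i _ /=.
  have arr_term : parr m i * (f (arr_move K m i) - f m)
                  <= parr m i * (c * (g (arr_move K m i) - g m) + d).
    case: (boolP (arr_ok K m i)) => ok; last by rewrite parr0 // !mul0r.
    exact/ler_wpM2l/arr_le/ok/ltn_ord/parr_ge0.
  have dep_term : pdep m i * (f (dep_move K m i) - f m)
                  <= pdep m i * (c * (g (dep_move K m i) - g m) + d).
    case: (boolP (dep_ok m i)) => ok; last by rewrite pdep0 // !mul0r.
    exact/ler_wpM2l/dep_le/ok/ltn_ord/pdep_ge0.
  lra.
by rewrite lerD2l ler_piMr ?sum_jump_prob_le1.
Qed.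

Lemma step_le f g m : (forall x, f x <= g x) -> P f m <= P g m.
Proof.
move=> fg; rewrite /step; apply: lerD.
  apply: ler_sum => i _; apply: lerD; apply: ler_wpM2l => //.
  - by rewrite divr_ge0 ?arr_rate_ge0 // ltW // Lam_gt0.
  - by rewrite divr_ge0 ?dep_rate_ge0 // ltW // Lam_gt0.
apply: ler_wpM2l => //; rewrite subr_ge0 (le_trans _ (sum_jump_prob_le1 m)) //.
by under eq_bigr do rewrite mulrDl.
Qed.

Lemma step_affine c d f m : P (fun x => c * f x + d) m = c * P f m + d.
Proof. by rewrite !stepE drift_affine; ring. Qed.

Lemma iter_step_le k f g : (forall x, f x <= g x) -> forall x, iter k P f x <= iter k P g x.
Proof. by move=> fg; elim: k => //= k IH x; exact: step_le. Qed.

Lemma iter_step_affine k c d f x :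
  iter k P (fun y => c * f y + d) x = c * iter k P f x + d.
Proof.
elim: k x => //= k IH x.
by rewrite (_ : iter k P _ = fun y => c * iter k P f y + d) ?step_affine //; apply: funext.
Qed.

Lemma drift_PhiE m : drift Phi m = n%:R / L *
  (\sum_(j < K) arr_weight j * (2 * Xr m j + 1)
   + \sum_(j < K) (0 < Xq m j)%N%:R * (1 - 2 * Xr m j)).
Proof.
transitivity ((\sum_(i < K) arr_rate K a n m i * (fun x : nat => 2 * x%:R + 1) (Xq m i)
             + \sum_(i < K) dep_rate R K n m i * (fun x : nat => 1 - 2 * x%:R) (Xq m i)) / L).
  rewrite -big_split mulr_suml; apply: eq_bigr => i _ /=.
  have -> : parr m i * (Phi (arr_move K m i) - Phi m) = parr m i * (2 * Xr m i + 1).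
    case: (boolP (arr_ok K m i)) => [ok|/parr0 ->]; last by rewrite !mul0r.
    by rewrite Phi_arr_move //; congr (_ * _); ring.
  have -> : pdep m i * (Phi (dep_move K m i) - Phi m) = pdep m i * (1 - 2 * Xr m i).
    case: (boolP (dep_ok m i)) => [ok|/pdep0 ->]; last by rewrite !mul0r.
    by rewrite Phi_dep_move //; congr (_ * _); ring.
  by rewrite /parr /pdep /Xr; ring.
rewrite (sum_arr_rate m (fun x => 2 * x%:R + 1)) (sum_dep_rate m (fun x => 1 - 2 * x%:R)).
by rewrite /Xr; ring.
Qed.

Lemma drift_Phi_le m : drift Phi m <= 1 - 2 * sqn / L * \sum_(j < K) a j * Xr m j.
Proof.
have s0 := sqrtn_gt0; have L0 := Lam_gt0; have W_le := sum_weights_le m.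
set W := _ + _ in W_le; set S := \sum_(j < K) a j * Xr m j.
rewrite drift_PhiE.
have -> : \sum_(j < K) arr_weight j * (2 * Xr m j + 1)
          + \sum_(j < K) (0 < Xq m j)%N%:R * (1 - 2 * Xr m j) = W - 2 / sqn * S.
  rewrite /W /S mulr_sumr -!big_split -sumrB; apply: eq_bigr => j _ /=.
  have busy : (0 < Xq m j)%N%:R * Xr m j = Xr m j by rewrite /Xr; case: (Xq m j) => [|?] /=; ring.
  by rewrite /arr_weight mulrBr mulr1 mulrCA busy; ring.
have -> : n%:R / L * (W - 2 / sqn * S) = n%:R * W / L - 2 * sqn / L * S.
  by rewrite -{1 3}sqr_sqrtn; field; rewrite !gt_eqF.
rewrite lerD2r ler_pdivrMr // mul1r LamE ler_wpDr //.
by rewrite ler_wpM2l ?ler0n.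
Qed.

Lemma drift_const c m : drift (fun=> c) m = 0.
Proof. by rewrite /drift big1 // => i _; rewrite !subrr !mulr0 addr0. Qed.

Lemma iter_step_ge0 k f x : (forall y, 0 <= f y) -> 0 <= iter k P f x.
Proof.
move=> f0; elim: k x => //= k IH x.
by apply: le_trans (@step_le (fun=> 0) _ x IH); rewrite stepE drift_const addr0.
Qed.

Lemma zsq_ge0 x : 0 <= zsq R K n x.
Proof. by rewrite divr_ge0 ?ler0n ?sumr_ge0 // => j _; exact: sqr_ge0. Qed.

Lemma zsq_le_Phi x : zsq R K n x <= Phi x / n%:R.
Proof.
rewrite ler_wpM2r ?invr_ge0 ?ler0n // ler_sum // => j _.
by rewrite lerXn2r ?nnegrE ?ler0n // ler_nat gap_le_Xq.
Qed.

Lemma Ezt_le s f m (A B C : R) : 0 <= s -> 0 <= A -> 0 <= B -> 0 <= C ->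
  (forall k, 0 <= iter k P f m) ->
  (forall k, iter k P f m <= A + B * k%:R + C * (k%:R - L * s) ^+ 2) ->
  (Ezt K a n s f m <= (A + B * (L * s) + C * (L * s))%:E)%E.
Proof.
move=> s0 A0 B0 C0 iter_ge0 iter_le.
have lam0 : 0 <= L * s by rewrite mulr_ge0 // ltW // Lam_gt0.
apply: nneg_series_le => [k|]; last exact: poisson_mean_le.
by rewrite mulr_ge0 // divr_ge0 ?mulr_ge0 ?expR_ge0 ?exprn_ge0 ?ler0n.
Qed.

Variable beta : R.
Hypothesis beta_gt0 : 0 < beta.
Hypothesis beta_le_tail : forall i, (i < K)%N -> beta <= \sum_(i <= j < K) a j.

Lemma sum_mul_Xr_ge m : beta * Xr m K.-1 <= \sum_(j < K) a j * Xr m j.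
Proof.
rewrite sum_mul_Xr_abel /Xr /Xq prednK // natr_sum mulr_sumr.
by apply: ler_sum => i _; rewrite mulrC ler_wpM2l ?ler0n ?beta_le_tail.
Qed.

Definition kappa := 2 * sqn * beta / (K%:R * L).

Lemma kappa_gt0 : 0 < kappa.
Proof. by rewrite divr_gt0 ?mulr_gt0 ?sqrtn_gt0 ?Lam_gt0 ?ltr0n. Qed.

Lemma drift_Phi_le_kappa m : drift Phi m <= 1 - kappa * normX m.
Proof.
apply: le_trans (drift_Phi_le m) _; rewrite lerD2l lerN2.
have K0 : 0 < K%:R :> R by rewrite ltr0n.
have s0 := sqrtn_gt0; have L0 := Lam_gt0.
have -> : kappa * normX m = 2 * sqn / L * (beta * (normX m / K%:R)).
  by rewrite /kappa; field; rewrite !gt_eqF.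
apply: ler_wpM2l; first by rewrite divr_ge0 ?mulr_ge0 ?ltW.
apply: le_trans (sum_mul_Xr_ge m); apply: ler_wpM2l; first exact: ltW.
by rewrite ler_pdivrMr // mulrC normX_le_last.
Qed.

Lemma drift_normX_le m : 0 < normX m ->
  drift normX m <= (1 - kappa * normX m) / (2 * normX m).
Proof.
move=> N0; have Phi0 : 0 < Phi m by rewrite -sqr_normX exprn_gt0.
apply: le_trans (@drift_le normX Phi m (2 * normX m)^-1 0 (lexx 0) _ _) _.
- by move=> i _ _; rewrite addr0 mulrC; exact: sqrtr_sub_le (Phi_ge0 _ _ _) Phi0.
- by move=> i _ _; rewrite addr0 mulrC; exact: sqrtr_sub_le (Phi_ge0 _ _ _) Phi0.
rewrite addr0 mulrC; apply: ler_wpM2r; last exact: drift_Phi_le_kappa.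
by rewrite invr_ge0 mulr_ge0 ?ltW.
Qed.

Definition hinge_floor := 2 / kappa.

Lemma hinge_floor_gt0 : 0 < hinge_floor.
Proof. by rewrite divr_gt0 ?kappa_gt0. Qed.

Lemma drift_normX_far m : hinge_floor <= normX m -> drift normX m <= - (kappa / 4).
Proof.
move=> far; have k0 := kappa_gt0.
have N0 : 0 < normX m by apply: lt_le_trans far; exact: hinge_floor_gt0.
apply: le_trans (drift_normX_le m N0) _.
rewrite ler_pdivrMr ?mulr_gt0 //.
have : kappa * hinge_floor = 2 by rewrite /hinge_floor; field; rewrite gt_eqF.
nra.
Qed.

Lemma drift_hinge_far m r : hinge_floor <= normX m ->
  drift (fun x => hinge r (normX x)) m <= 1 - kappa / 2 * Num.max (normX m - r) 0.
Proof.
move=> far; set c := Num.max (normX m - r) 0.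
have c0 : 0 <= c by rewrite le_max lexx orbT.
apply: le_trans (@drift_le _ normX m (2 * c) 1 ler01 _ _) _.
- move=> i iK ok; have /andP[lo hi] := normX_arr_move R ok iK.
  by have := hinge_sub_le r (normX m) (normX (arr_move K m i)); rewrite -/c; nra.
- move=> i iK ok; have /andP[lo hi] := normX_dep_move R ok iK.
  by have := hinge_sub_le r (normX m) (normX (dep_move K m i)); rewrite -/c; nra.
by have := drift_normX_far m far; nra.
Qed.

Lemma drift_hinge_near m r : normX m <= r + 1 ->
  drift (fun x => hinge r (normX x)) m <= 4.
Proof.
move=> near; have h0 := hinge_ge0 r (normX m).
apply: le_trans (@drift_le _ normX m 0 4 _ _ _) _; rewrite ?mul0r ?add0r //.
- move=> i iK ok; have /andP[_ hi] := normX_arr_move R ok iK.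
  by have := @hinge_le_sqr _ r (normX (arr_move K m i)) 2; rewrite expr2; lra.
- move=> i iK ok; have /andP[_ hi] := normX_dep_move R ok iK.
  by have := @hinge_le_sqr _ r (normX (dep_move K m i)) 2; rewrite expr2; lra.
Qed.

Lemma step_hinge_le m r rho : hinge_floor <= r -> rho <= r + kappa / 4 ->
  P (fun x => hinge r (normX x)) m <= hinge rho (normX m) + 5.
Proof.
move=> floor_r rho_le; rewrite stepE; have k0 := kappa_gt0.
have h0 := hinge_ge0 rho (normX m).
case: (leP hinge_floor (normX m)) => [far|near].
  have := drift_hinge_far m r far.
  have := @hinge_shift_le _ r (kappa / 4) (normX m) (divr_ge0 (ltW k0) (ler0n _ 4)).
  have := hinge_antitone _ _ (normX m) rho_le.
  lra.
have := @drift_hinge_near m r (ltW (lt_le_trans near (ler_wpDr ler01 floor_r))).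
by have := @hinge_le_sqr _ r (normX m) 0 (lexx 0); rewrite expr0n /=; lra.
Qed.

(* The hinge level after k steps from a state with normX <= L0: it decreases by kappa / 4 per
   step, the guaranteed descent speed of normX above hinge_floor, until it reaches hinge_floor. *)
Definition hinge_level (L0 : R) (k : nat) := Num.max (L0 - kappa / 4 * k%:R) hinge_floor.

Lemma hinge_level_ge_floor L0 k : hinge_floor <= hinge_level L0 k.
Proof. by rewrite le_max lexx orbT. Qed.

Lemma hinge_level_ge0 L0 k : 0 <= hinge_level L0 k.
Proof. exact: le_trans (ltW hinge_floor_gt0) (hinge_level_ge_floor L0 k). Qed.

Lemma hinge_level_S L0 k : hinge_level L0 k <= hinge_level L0 k.+1 + kappa / 4.
Proof.
rewrite /hinge_level -[k.+1]addn1 natrD !maxEle; have := kappa_gt0.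
by case: (leP (L0 - _) hinge_floor) => h1; case: (leP (L0 - _) hinge_floor) => h2; nra.
Qed.

Lemma iter_hinge_le L0 k x :
  iter k P (fun y => hinge (hinge_level L0 k) (normX y)) x
  <= hinge (hinge_level L0 0) (normX x) + 5 * k%:R.
Proof.
elim: k x => [|k IH] x; first by rewrite /= mulr0 addr0.
rewrite iterSr.
apply: le_trans (@iter_step_le k _ (fun y => 1 * hinge (hinge_level L0 k) (normX y) + 5) _ x) _.
  move=> y; rewrite mul1r; apply: step_hinge_le; first exact: hinge_level_ge_floor.
  exact: hinge_level_S.
by rewrite iter_step_affine mul1r -[k.+1]addn1 natrD; have := IH x; lra.
Qed.

Lemma iter_Phi_le k x : iter k P Phi x <= Phi x + k%:R.
Proof.
elim: k x => [|k IH] x; first by rewrite addr0.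
rewrite iterSr; apply: le_trans (@iter_step_le k _ (fun y => 1 * Phi y + 1) _ x) _.
  move=> y; rewrite mul1r stepE lerD2l; apply: le_trans (drift_Phi_le_kappa y) _.
  by rewrite gerDl oppr_le0 mulr_ge0 ?normX_ge0 // ltW // kappa_gt0.
by rewrite iter_step_affine mul1r -[k.+1]addn1 natrD; have := IH x; lra.
Qed.

Lemma iter_zsq_le_Phi k x : iter k P (zsq R K n) x <= (Phi x + k%:R) / n%:R.
Proof.
apply: le_trans (@iter_step_le k _ (fun y => n%:R^-1 * Phi y + 0) _ x) _.
  by move=> y; rewrite addr0 mulrC; exact: zsq_le_Phi.
rewrite iter_step_affine addr0 mulrC; apply: ler_wpM2r; first by rewrite invr_ge0 ler0n.
exact: iter_Phi_le.
Qed.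

Lemma iter_zsq_le_hinge L0 k x : normX x <= L0 ->
  iter k P (zsq R K n) x <= (2 * hinge_level L0 k ^+ 2 + 10 * k%:R) / n%:R.
Proof.
move=> x_le; have r0 := hinge_level_ge0 L0 k; set r := hinge_level L0 k in r0 *.
have n_inv0 : 0 <= n%:R^-1 :> R by rewrite invr_ge0 ler0n.
apply: le_trans (@iter_step_le k _
  (fun y => 2 * n%:R^-1 * hinge r (normX y) + 2 * r ^+ 2 / n%:R) _ x) _.
  move=> y; apply: le_trans (zsq_le_Phi y) _; rewrite -sqr_normX.
  have -> : 2 * n%:R^-1 * hinge r (normX y) + 2 * r ^+ 2 / n%:R
            = (2 * r ^+ 2 + 2 * hinge r (normX y)) / n%:R by ring.
  by apply: ler_wpM2r => //; apply: sqr_le_hinge; rewrite ?normX_ge0.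
rewrite iter_step_affine.
have start0 : hinge (hinge_level L0 0) (normX x) <= 0 ^+ 2.
  apply: hinge_le_sqr => //; rewrite subr_le0 (le_trans x_le) //.
  by rewrite le_max mulr0 subr0 lexx.
have := iter_hinge_le L0 k x; rewrite expr0n /= in start0 => iter_le.
have : 2 * n%:R^-1 * iter k P (fun y => hinge r (normX y)) x <= 2 * n%:R^-1 * (5 * k%:R).
  by apply: ler_wpM2l; [rewrite mulr_ge0 | lra].
lra.
Qed.

Lemma sqr_hinge_level_le L0 lam k : 0 <= L0 -> 0 < lam -> 8 * L0 / kappa <= lam ->
  hinge_level L0 k ^+ 2 <= hinge_floor ^+ 2 + 4 * L0 ^+ 2 * (k%:R - lam) ^+ 2 / lam ^+ 2.
Proof.
move=> L0_ge0 lam_gt0 lam_ge; have k0 := kappa_gt0; have f0 := hinge_floor_gt0.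
have tail0 : 0 <= 4 * L0 ^+ 2 * (k%:R - lam) ^+ 2 / lam ^+ 2.
  apply: divr_ge0; last exact: sqr_ge0.
  by apply: mulr_ge0; [apply: mulr_ge0|]; rewrite ?sqr_ge0 ?ler0n.
rewrite /hinge_level maxEle; case: (leP (L0 - kappa / 4 * k%:R) hinge_floor) => [_|above].
  by have := sqr_ge0 hinge_floor; lra.
have k_lt : 2 * k%:R < lam.
  apply: lt_le_trans lam_ge; rewrite ltr_pdivlMr //; lra.
have gap : lam ^+ 2 <= 4 * (k%:R - lam) ^+ 2.
  have : lam <= 2 * (lam - k%:R) by have := ler0n R k; lra.
  nra.
have : L0 ^+ 2 <= 4 * L0 ^+ 2 * (k%:R - lam) ^+ 2 / lam ^+ 2.
  by rewrite ler_pdivlMr ?exprn_gt0 //; have := ler_wpM2l (sqr_ge0 L0) gap; lra.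
have : (L0 - kappa / 4 * k%:R) ^+ 2 <= L0 ^+ 2.
  have : 0 <= kappa / 4 * k%:R by rewrite mulr_ge0 ?ler0n // divr_ge0 // ltW.
  nra.
have := sqr_ge0 hinge_floor; lra.
Qed.

Definition floor_const := 2 * K%:R ^+ 2 * (Lam_coef + 1) ^+ 2 / beta ^+ 2.

Lemma floor_const_ge0 : 0 <= floor_const.
Proof. by rewrite divr_ge0 ?sqr_ge0 // mulr_ge0 ?sqr_ge0 // mulr_ge0 ?sqr_ge0. Qed.

Lemma sqr_hinge_floor_le : 2 * hinge_floor ^+ 2 / n%:R <= floor_const.
Proof.
have n0 : (0 : R) < n%:R by rewrite ltr0n n_gt0.
have s0 := sqrtn_gt0; have L0 := Lam_gt0; have b0 := beta_gt0.
have K0 : (0 : R) < K%:R by rewrite ltr0n.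
have -> : 2 * hinge_floor ^+ 2 / n%:R = 2 * K%:R ^+ 2 / beta ^+ 2 * (L / n%:R) ^+ 2.
  by rewrite /hinge_floor /kappa -{2 3}sqr_sqrtn; field; rewrite !gt_eqF.
rewrite /floor_const [leRHS]mulrAC; apply: ler_wpM2l; first by rewrite divr_ge0 ?sqr_ge0 ?mulr_ge0.
have : L / n%:R <= Lam_coef + 1 by rewrite ler_pdivrMr // mulrC Lam_le.
have : 0 <= L / n%:R by rewrite divr_ge0 ?ler0n ?ltW.
nra.
Qed.

(** * The moment bound *)

Definition moment_time0 := 1 + 4 * K%:R ^+ 2 / beta.

Definition moment_const := floor_const + 10 * (Lam_coef + 1) + 8 * K%:R ^+ 2.

Lemma moment_time0_ge1 : 1 <= moment_time0.
Proof.
rewrite lerDl; apply: divr_ge0; last exact: ltW.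
by apply: mulr_ge0; [lra | exact: sqr_ge0].
Qed.

Lemma moment_const_gt0 : 0 < moment_const.
Proof.
have K0 : (0 : R) < K%:R ^+ 2 by rewrite exprn_gt0 // ltr0n.
by have := floor_const_ge0; have := Lam_coef_ge0; rewrite /moment_const; lra.
Qed.

Variables (t : R) (m : nat -> nat).
Hypothesis t_ge : moment_time0 <= t.

Local Notation z := (znorm R K n m).
Local Notation lam := (L * (z * t)).

Definition iter_zsq_envelope (A B C : R) := [/\ 0 <= A, 0 <= B, 0 <= C,
  forall k, iter k P (zsq R K n) m <= A + B * k%:R + C * (k%:R - lam) ^+ 2 &
  A + B * lam + C * lam <= moment_const * (t * z)].

Lemma t_ge1 : 1 <= t.
Proof. exact: le_trans moment_time0_ge1 t_ge. Qed.

Lemma Phi_le_znorm : Phi m <= K%:R ^+ 2 * n%:R * z ^+ 2.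
Proof.
have n0 : (0 : R) < n%:R by rewrite ltr0n n_gt0.
rewrite sqr_sqrtr ?zsq_ge0 //.
apply: le_trans (Phi_le_sum_sqr R K m K_gt0) _.
rewrite /zsq [X in _ <= X](_ : _ = K%:R ^+ 2 * \sum_(j < K) (m j)%:R ^+ 2) //.
by field; rewrite gt_eqF.
Qed.

Lemma normX_le_znorm : normX m <= K%:R * sqn * z.
Proof.
apply: sqrtr_le_sqr; first by rewrite !mulr_ge0 ?ler0n ?sqrtr_ge0.
by rewrite !exprMn sqr_sqrtn; exact: Phi_le_znorm.
Qed.

Lemma iter_zsq_envelope_small : z <= t -> iter_zsq_envelope (Phi m / n%:R) n%:R^-1 0.
Proof.
move=> z_le; have n0 : (0 : R) < n%:R by rewrite ltr0n n_gt0.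
have z0 : 0 <= z := sqrtr_ge0 _; have tz0 : 0 <= t * z by have := t_ge1; nra.
split.
- by rewrite divr_ge0 ?Phi_ge0 ?ler0n.
- by rewrite invr_ge0 ler0n.
- exact: lexx.
- move=> k; rewrite mul0r addr0; apply: le_trans (iter_zsq_le_Phi k m) _.
  by rewrite mulrDl [_^-1 * _]mulrC.
have A_le : Phi m / n%:R <= K%:R ^+ 2 * (t * z).
  rewrite ler_pdivrMr //; apply: le_trans Phi_le_znorm _.
  have zz : z ^+ 2 <= t * z by nra.
  by rewrite mulrAC; apply: ler_wpM2r; [exact: ler0n | exact: (ler_wpM2l (sqr_ge0 (K%:R : R)) zz)].
have B_le : n%:R^-1 * lam <= (Lam_coef + 1) * (t * z).
  rewrite (_ : n%:R^-1 * lam = L / n%:R * (t * z)); last by ring.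
  by apply: ler_wpM2r => //; rewrite ler_pdivrMr // mulrC Lam_le.
have := mulr_ge0 floor_const_ge0 tz0; have := mulr_ge0 (sqr_ge0 (K%:R : R)) tz0.
have := mulr_ge0 (addr_ge0 Lam_coef_ge0 ler01) tz0.
by rewrite /moment_const; lra.
Qed.

(* 4 * normX m / kappa steps bring hinge_level (normX m) down to hinge_floor; moment_time0 is
   chosen so that the Poisson mean lam is at least twice that. *)
Lemma twice_descent_time_le : t < z -> 8 * normX m / kappa <= lam.
Proof.
move=> z_gt; have s0 := sqrtn_gt0; have L0 := Lam_gt0; have b0 := beta_gt0.
have K0 : (0 : R) < K%:R by rewrite ltr0n.
have c0 : 0 <= 4 * K%:R * L / (sqn * beta) by rewrite divr_ge0 ?mulr_ge0 ?ltW.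
have -> : 8 * normX m / kappa = 4 * K%:R * L / (sqn * beta) * normX m.
  by rewrite /kappa; field; rewrite !gt_eqF.
apply: le_trans (ler_wpM2l c0 normX_le_znorm) _.
have -> : 4 * K%:R * L / (sqn * beta) * (K%:R * sqn * z) = 4 * K%:R ^+ 2 / beta * (L * z).
  by field; rewrite !gt_eqF.
have : 4 * K%:R ^+ 2 / beta <= t by have := t_ge; rewrite /moment_time0; lra.
have : 0 <= L * z by rewrite mulr_ge0 ?sqrtr_ge0 ?ltW.
nra.
Qed.

Lemma envelope_large_sum_le : t < z ->
  2 * hinge_floor ^+ 2 / n%:R + 10 / n%:R * lam + 8 * normX m ^+ 2 / (n%:R * lam ^+ 2) * lam
  <= moment_const * (t * z).
Proof.
move=> z_gt; have n0 : (0 : R) < n%:R by rewrite ltr0n n_gt0.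
have L1 := Lam_ge1; have L0 := Lam_gt0; have t1 := t_ge1.
have z0 : 0 < z by lra.
have t0 : 0 < t by lra.
have tz1 : 1 <= t * z by nra.
have lam0 : 0 < lam by rewrite !mulr_gt0 //; lra.
have Ln_le : L / n%:R <= Lam_coef + 1 by rewrite ler_pdivrMr // mulrC Lam_le.
have A_le : 2 * hinge_floor ^+ 2 / n%:R <= floor_const * (t * z).
  by apply: le_trans sqr_hinge_floor_le _; rewrite ler_peMr ?floor_const_ge0.
have B_le : 10 / n%:R * lam <= 10 * (Lam_coef + 1) * (t * z).
  have -> : 10 / n%:R * lam = 10 * (L / n%:R) * (t * z) by ring.
  by apply: ler_wpM2r; [lra | apply: ler_wpM2l; [lra | exact: Ln_le]].
have C_le : 8 * normX m ^+ 2 / (n%:R * lam ^+ 2) * lam <= 8 * K%:R ^+ 2 * (t * z).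
  have -> : 8 * normX m ^+ 2 / (n%:R * lam ^+ 2) * lam = 8 * normX m ^+ 2 / (n%:R * lam).
    by field; rewrite !gt_eqF.
  rewrite ler_pdivrMr ?mulr_gt0 // sqr_normX.
  have : z ^+ 2 <= t * z * lam.
    have -> : t * z * lam = L * t ^+ 2 * z ^+ 2 by ring.
    have : 1 <= L * t ^+ 2 by nra.
    by have := sqr_ge0 z; nra.
  move=> zz; have := ler_wpM2l (mulr_ge0 (sqr_ge0 (K%:R : R)) (ltW n0)) zz.
  by have := Phi_le_znorm; nra.
by rewrite /moment_const; lra.
Qed.

Lemma iter_zsq_envelope_large : t < z ->
  iter_zsq_envelope (2 * hinge_floor ^+ 2 / n%:R) (10 / n%:R)
                    (8 * normX m ^+ 2 / (n%:R * lam ^+ 2)).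
Proof.
move=> z_gt; have n0 : (0 : R) < n%:R by rewrite ltr0n n_gt0.
have t1 := t_ge1; have z0 : 0 < z by lra.
have t0 : 0 < t by lra.
have L0 := Lam_gt0; have lam0 : 0 < lam by rewrite !mulr_gt0.
split; last exact: envelope_large_sum_le.
- by rewrite divr_ge0 ?ler0n // mulr_ge0 ?sqr_ge0.
- by rewrite divr_ge0 ?ler0n.
- by apply: divr_ge0; apply: mulr_ge0; rewrite ?sqr_ge0 ?ler0n.
move=> k; apply: le_trans (iter_zsq_le_hinge (normX m) k m (lexx _)) _.
have := sqr_hinge_level_le (normX m) lam k (normX_ge0 R K m) lam0 (twice_descent_time_le z_gt).
have -> : 2 * hinge_floor ^+ 2 / n%:R + 10 / n%:R * k%:R
          + 8 * normX m ^+ 2 / (n%:R * lam ^+ 2) * (k%:R - lam) ^+ 2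
  = (2 * (hinge_floor ^+ 2 + 4 * normX m ^+ 2 * (k%:R - lam) ^+ 2 / lam ^+ 2) + 10 * k%:R) / n%:R.
  by field; rewrite !gt_eqF.
by move=> lvl_le; apply: ler_wpM2r; [rewrite invr_ge0 ler0n | lra].
Qed.

Lemma iter_zsq_envelope_exists : exists A B C, iter_zsq_envelope A B C.
Proof.
case: (leP z t) => [z_le|z_gt]; last by do 3 eexists; exact: iter_zsq_envelope_large.
by exists (Phi m / n%:R), n%:R^-1, 0; exact: iter_zsq_envelope_small.
Qed.

End Generator.

Arguments Ezt_le {R K a n s f m A B C}.
Arguments iter_step_ge0 {R K a n} K_gt0 a_lt_n k {f} x.
Arguments iter_zsq_envelope_exists {R K a n} K_gt0 a_lt_n {beta} beta_gt0 beta_le_tail {t} m.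

Theorem lemma6p1 (R : realType) (K : nat) (a : nat -> R) :
  (2 <= K)%N ->
  (forall i : nat, (i < K)%N -> 0 < \sum_(i <= j < K) a j) ->
  exists t0 D3 : R, 0 < t0 /\ 0 < D3 /\
    forall t : R, t0 <= t ->
    forall n : nat, (forall l : nat, (l < K)%N -> (Num.max (a l) 0) ^+ 2 < n%:R) ->
    forall m : nat -> nat, (forall j : nat, (K <= j)%N -> m j = 0%N) ->
      (@Ezt R K a n (@znorm R K n m * t) (@zsq R K n) m
       <= (D3 * (t * @znorm R K n m
                 + (1 + t ^+ 2 * (@znorm R K n m ^+ 2 + 1)) / n%:R))%:E)%E.
Proof.
move=> K2 tail_gt0; have K_gt0 : (0 < K)%N by apply: leq_trans K2.
have [beta beta_gt0 beta_le_tail] :=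
  exists_pos_lower_bound (fun i => \sum_(i <= j < K) a j) K tail_gt0.
have t0_ge1 := moment_time0_ge1 R K beta beta_gt0.
exists (moment_time0 R K beta), (moment_const R K a beta).
split; first lra; split; first exact: moment_const_gt0 R K a K_gt0 beta.
move=> t t_ge n a_lt_n m _; set z := znorm R K n m.
have [A [B [C [A0 B0 C0 iter_le sum_le]]]] :=
  iter_zsq_envelope_exists K_gt0 a_lt_n beta_gt0 beta_le_tail m t_ge.
have s0 : 0 <= z * t by rewrite mulr_ge0 ?sqrtr_ge0 //; lra.
have iter_ge0 k := iter_step_ge0 K_gt0 a_lt_n k m (zsq_ge0 R K n).
apply: le_trans (Ezt_le s0 A0 B0 C0 iter_ge0 iter_le) _.
rewrite lee_fin (le_trans sum_le) //; apply: ler_wpM2l; first exact/ltW/moment_const_gt0.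
by rewrite lerDl divr_ge0 ?ler0n // addr_ge0 // mulr_ge0 ?sqr_ge0 // addr_ge0 ?sqr_ge0.
Qed.
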